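(* Fix $\varepsilon>0$, put $t^{(a,b)}:=\frac{1-b}a$, let $Z_0^N$ start at $\lfloor N/\sqrt{\log N}\rfloor$, and let $Y_0^N(t):=\log_N^+\big(Z_0^N(t\varphi_N^{-1}\log N)\big)$ for $t\in[0,t^{(a,b)}+\varepsilon]$. Define $\widetilde Y_0^N(t):=\max_{t\le u\le t^{(a,b)}+\varepsilon}Y_0^N(u)$. Then $$\sup_{0\le t\le t^{(a,b)}+\varepsilon}\big|\widetilde Y_0^N(t)-Y_0^N(t)\big|\to0\quad\text{in probability as }N\to\infty.$$
   Context: Standing assumptions: $a>0$, $0<\varphi_N\le1$, $-\log_N\varphi_N\to b\in[0,1)$. $Z_0^N$ is the Markov chain on $\mathbb N_0$ jumping $k\to k+1$ at rate $k$ and $k\to k-1$ at rate $(1+a\varphi_N)k$. $\log_N^+(x):=\max\{\log x/\log N,0\}$ for $x>0$, $\log_N^+(0):=0$. *)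

From HB Require Import structures.
From mathcomp Require Import all_boot all_order all_algebra.
From mathcomp Require Import all_classical all_reals all_analysis.
Set Implicit Arguments. Unset Strict Implicit. Unset Printing Implicit Defensive.
Import Order.TTheory GRing.Theory Num.Theory.
Import numFieldNormedType.Exports.
Local Open Scope classical_set_scope.
Local Open Scope ring_scope.

Section Defs.
Variable R : realType.

Definition logNp (N k : nat) : R :=
  if k is 0 then 0 else Num.max (ln (k%:R) / ln (N%:R)) 0.

(* Pathwise (jump chain / holding time) construction of the Markov chain on N_0
   jumping k -> k+1 at rate k and k -> k-1 at rate (1 + a*phi) k.
   From state k > 0 the total rate is (2 + a*phi) k; the holding time is
   e / ((2 + a*phi) k) with e ~ Exp(1); the jump is upward iff u < 1/(2 + a*phi)
   with u ~ Unif[0,1]. State 0 is absorbing (its holding time, 1, is an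
   irrelevant convention since the state never changes afterwards). *)
Fixpoint jstate (a phi : R) (z0 : nat) (U : nat -> R) (n : nat) : nat :=
  match n with
  | 0 => z0
  | m.+1 => let k := jstate a phi z0 U m in
            if k == 0%N then 0%N
            else if U m < (2 + a * phi)^-1 then k.+1 else k.-1
  end.

Definition hold (a phi : R) (k : nat) (e : R) : R :=
  if k is 0 then 1 else e / ((2 + a * phi) * k%:R).

Definition jtime (a phi : R) (z0 : nat) (E U : nat -> R) (n : nat) : R :=
  \sum_(m < n) hold a phi (jstate a phi z0 U m) (E m).

(* Value of the chain at time t: the state after the last jump at or before t.
   On the (null) explosion event, the value 0 is an arbitrary convention. *)
Definition chain (a phi : R) (z0 : nat) (E U : nat -> R) (t : R) : nat :=
  match pselect (exists n, (fun n => t < jtime a phi z0 E U n.+1) n) with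
  | left H => jstate a phi z0 U (@ex_minn (fun n => t < jtime a phi z0 E U n.+1) H)
  | right _ => 0%N
  end.

Definition mutually_independent d (Omega : measurableType d)
    (P : probability Omega R) (I : eqType) (X : I -> Omega -> R) : Prop :=
  forall (J : seq I) (B : I -> set R), uniq J ->
    (forall i, measurable (B i)) ->
    P [set w | forall i, i \in J -> B i (X i w)] =
    (\prod_(i <- J) fine (P (X i @^-1` B i)))%:E.

End Defs.

From Pilot Require Import Defs.
From HB Require Import structures.
From mathcomp Require Import all_boot all_order all_algebra.
From mathcomp Require Import all_classical all_reals all_analysis.
From mathcomp Require Import measurable_realfun ring lra.
Set Implicit Arguments. Unset Strict Implicit. Unset Printing Implicit Defensive.
Import Order.TTheory GRing.Theory Num.Theory.
Import numFieldNormedType.Exports.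
Local Open Scope classical_set_scope.
Local Open Scope ring_scope.

(* If the running maximum of Y ahead of some time t exceeds Y(t) by delta, then
   the jump chain at some step exceeds K = N^(delta/2) times its value at an
   earlier step, hence K times its running minimum.  The chain steps up with
   probability p = 1/(2 + a phi) <= 1/2, and for such a walk z/r + ln r
   (position z, running minimum r > 0) is a supermartingale; it starts at
   1 + ln z0 <= 1 + ln N and is at least K once the walk overshoots.  Hence the
   probability is at most (1 + ln N)/N^(delta/2), which tends to 0.  Neither the
   holding times nor the asymptotics of phi play a role. *)
Definition walk_step (k : nat) (up : bool) : nat :=
  if k == 0%N then 0%N else if up then k.+1 else k.-1.

Definition walk_min_step (x : nat * nat) (up : bool) : nat * nat :=
  (walk_step x.1 up, minn x.2 (walk_step x.1 up)).

Fixpoint bool_seqs (n : nat) : seq (seq bool) :=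
  if n is n'.+1 then
    [seq true :: s | s <- bool_seqs n'] ++ [seq false :: s | s <- bool_seqs n']
  else [:: [::]].

Lemma size_bool_seqs n s : s \in bool_seqs n -> size s = n.
Proof.
elim: n s => [|n IH] s /=; first by rewrite inE => /eqP ->.
by rewrite mem_cat => /orP[] /mapP[s' /IH <- ->].
Qed.

Lemma mem_bool_seqs s : s \in bool_seqs (size s).
Proof.
elim: s => [|b s IH] /=; first by rewrite inE.
by rewrite mem_cat; case: b; apply/orP; [left|right]; apply/mapP; exists s.
Qed.

Section walk_potential.
Variable R : realType.
Implicit Types (K p : R) (x : nat * nat) (s : seq bool).

Definition overshoot K x : bool := (0 < x.2)%N && (K * x.2%:R <= x.1%:R).

Fixpoint overshoots K x s : bool :=
  if s is b :: s' then overshoot K x || overshoots K (walk_min_step x b) s'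
  else overshoot K x.

Lemma overshoots_cat K x s t : overshoots K x s -> overshoots K x (s ++ t).
Proof.
elim: s x => [|b s IH] x /=; first by case: t => //= c t ->.
by case/orP=> [->//|/IH ->]; rewrite orbT.
Qed.

Lemma overshoot_foldl K x s :
  ~~ overshoots K x s -> ~~ overshoot K (foldl walk_min_step x s).
Proof. by elim: s x => [|b s IH] x //=; rewrite negb_or => /andP[_ /IH]. Qed.

Definition path_weight p s : R := \prod_(b <- s) (if b then p else 1 - p).

Definition overshoot_prob K p n x : R :=
  \sum_(s <- bool_seqs n) path_weight p s * (overshoots K x s)%:R.

Lemma sum_path_weight p n : \sum_(s <- bool_seqs n) path_weight p s = 1.
Proof.
elim: n => [|n IH] /=; first by rewrite big_seq1 /path_weight big_nil.
rewrite big_cat !big_map /= /path_weight.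
under eq_bigr do rewrite big_cons.
under [X in _ + X]eq_bigr do rewrite big_cons.
by rewrite -!mulr_sumr IH !mulr1 addrC subrK.
Qed.

Lemma overshoot_probS K p n x :
  overshoot_prob K p n.+1 x = if overshoot K x then 1 else
    p * overshoot_prob K p n (walk_min_step x true) +
    (1 - p) * overshoot_prob K p n (walk_min_step x false).
Proof.
rewrite /overshoot_prob /= big_cat !big_map /= /path_weight.
under eq_bigr do rewrite big_cons.
under [X in _ + X]eq_bigr do rewrite big_cons.
case: (overshoot K x) => /=.
  under eq_bigr do rewrite mulr1.
  under [X in _ + X]eq_bigr do rewrite mulr1.
  by rewrite -!mulr_sumr !sum_path_weight !mulr1 addrC subrK.
by rewrite !mulr_sumr; congr (_ + _); apply: eq_bigr => s _; rewrite mulrA.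
Qed.

Definition min_potential x : R :=
  if x.2 == 0%N then 0 else x.1%:R / x.2%:R + ln x.2%:R.

Lemma min_potential_ge0 x : 0 <= min_potential x.
Proof.
rewrite /min_potential; case: eqP => // /eqP r0.
by rewrite addr_ge0 ?divr_ge0 ?ln_ge0 // ler1n lt0n.
Qed.

Lemma overshoot_potential K x : overshoot K x -> K <= min_potential x.
Proof.
case/andP=> r0 Kr; rewrite /min_potential gtn_eqF //.
have r0' : 0 < x.2%:R :> R by rewrite ltr0n.
apply: (@le_trans _ _ (x.1%:R / x.2%:R)); first by rewrite ler_pdivlMr // mulrC.
by rewrite lerDl ln_ge0 // ler1n.
Qed.

Lemma ln_predn_le (r : nat) : (1 < r)%N -> ln (r.-1%:R : R) <= ln r%:R - r%:R^-1.
Proof.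
move=> r1; have rp : 0 < r%:R :> R by rewrite ltr0n ltnW.
have r1' : r%:R^-1 < 1 :> R by rewrite invf_lt1 // ltr1n.
have -> : r.-1%:R = r%:R * (1 - r%:R^-1) :> R.
  by rewrite mulrBr mulr1 divff ?gt_eqF // -[in RHS](prednK (ltnW r1)) -natr1 addrK.
by rewrite lnM ?posrE ?subr_gt0 // lerD2l le_ln1Dx // ltrN2.
Qed.

Lemma min_potential_super p x : 0 <= p <= 2^-1 -> (x.2 <= x.1)%N ->
  p * min_potential (walk_min_step x true) +
  (1 - p) * min_potential (walk_min_step x false) <= min_potential x.
Proof.
case: x => z r /andP[p0 p2] /= rz.
have [->|r0] := eqVneq r 0%N.
  by rewrite /min_potential /walk_min_step /= !min0n /= !mulr0 addr0.
have z0 : z != 0%N by rewrite -lt0n (leq_trans _ rz) // lt0n.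
have rp : 0 < r%:R :> R by rewrite ltr0n lt0n.
have ir : 0 < r%:R^-1 :> R by rewrite invr_gt0.
rewrite /min_potential /walk_min_step /walk_step /= (negbTE z0).
have -> : minn r z.+1 = r by apply/minn_idPl/leqW.
rewrite (negbTE r0) -natr1 mulrDl.
have [rz'|zr] := ltnP r z.
  have -> : minn r z.-1 = r by apply/minn_idPl; rewrite -ltnS prednK // lt0n.
  have -> : z.-1%:R = z%:R - 1 :> R.
    by rewrite -[in RHS](prednK (_ : 0 < z)%N) ?lt0n // -natr1 addrK.
  rewrite (negbTE r0) mulrBl mul1r; nra.
have -> : z = r by apply/eqP; rewrite eqn_leq zr rz.
rewrite (minn_idPr (leq_pred r)) divff ?lt0r_neq0 //.
have [->|r1] := eqVneq r 1%N; first by rewrite /= ln1 invr1 mulr0; lra.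
have r1' : (1 < r)%N by rewrite ltn_neqAle eq_sym r1 lt0n.
have rm1 : (0 < r.-1)%N by rewrite -ltnS prednK // ltnW.
rewrite gtn_eqF // divff ?pnatr_eq0 -?lt0n //.
have := ln_predn_le r1'; nra.
Qed.

Lemma overshoot_prob_le K p n x : 0 < K -> 0 <= p <= 2^-1 -> (x.2 <= x.1)%N ->
  overshoot_prob K p n x <= min_potential x / K.
Proof.
move=> K0 hp; have /andP[p0 p2] := hp.
have over x' : overshoot K x' -> 1 <= min_potential x' / K.
  by move/overshoot_potential; rewrite ler_pdivlMr // mul1r.
have pot0 x' : 0 <= min_potential x' / K by rewrite divr_ge0 ?min_potential_ge0 ?ltW.
have inv x' b : ((walk_min_step x' b).2 <= (walk_min_step x' b).1)%N by exact: geq_minr.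
elim: n x => [|n IH] x rz.
  rewrite /overshoot_prob /= big_seq1 /path_weight big_nil mul1r.
  change (overshoots K x [::]) with (overshoot K x).
  by case: (boolP (overshoot K x)) => [/over|_].
rewrite overshoot_probS; case: (boolP (overshoot K x)) => [/over//|_].
apply: le_trans (_ : (p * min_potential (walk_min_step x true) +
  (1 - p) * min_potential (walk_min_step x false)) / K <= _); last first.
  by rewrite ler_pM2r ?invr_gt0 // min_potential_super.
have q0 : 0 <= 1 - p by lra.
by rewrite [leRHS]mulrDl -!mulrA lerD // ler_wpM2l ?IH.
Qed.

Lemma min_potential_diag_le (z N : nat) : (z <= N)%N ->
  min_potential (z, z) <= 1 + ln (N%:R : R).
Proof.
rewrite /min_potential /=; have [->|z0] := eqVneq z 0%N.
  move=> _; case: N => [|N]; first by rewrite ln0 ?addr0.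
  by rewrite addr_ge0 // ln_ge0 // ler1n.
move=> zN; rewrite divff ?pnatr_eq0 // lerD2l ler_ln ?posrE ?ler_nat ?ltr0n ?lt0n //.
by rewrite -lt0n (leq_trans _ zN) // lt0n.
Qed.

End walk_potential.

Section measurable_discrete.
Context d d' (Om : measurableType d) (T : measurableType d').

Lemma measurable_bool_set (b : Om -> bool) :
  measurable_fun setT b -> measurable [set w | b w].
Proof. by move=> mb; rewrite -[X in measurable X]setTI; exact: mb. Qed.

Lemma measurable_fun_all (I : Type) (l : seq I) (f : I -> Om -> bool) :
  (forall i, measurable_fun setT (f i)) -> measurable_fun setT (fun w => all (f ^~ w) l).
Proof.
move=> mf; elim: l => [|i l IH] /=; first exact: measurable_cst.
exact: measurable_and.
Qed.

Lemma measurable_fun_nat_dep (g : Om -> nat) (F : nat -> Om -> T) :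
  measurable_fun setT g -> (forall k, measurable_fun setT (F k)) ->
  measurable_fun setT (fun w => F (g w) w).
Proof.
move=> mg mF _ Y mY; rewrite setTI.
have -> : (fun w => F (g w) w) @^-1` Y = \bigcup_k (g @^-1` [set k] `&` F k @^-1` Y).
  by apply/seteqP; split=> [w Yw|w [k _ [/= <-]]] //; exists (g w).
apply: bigcupT_measurable => k; apply: measurableI.
  by rewrite -[_ @^-1` _]setTI; exact: mg.
by rewrite -[_ @^-1` _]setTI; exact: mF.
Qed.

Lemma measurable_fun_ex_minn (P : nat -> Om -> bool) (h : nat -> Om -> T) (x0 : T) :
  (forall n, measurable_fun setT (P n)) -> (forall n, measurable_fun setT (h n)) ->
  measurable_fun setT (fun w => match pselect (exists n, P n w) with
    | left H => h (ex_minn H) w | right _ => x0 end).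
Proof.
move=> mP mh _ Y mY; rewrite setTI.
pose first n w := P n w && all (fun m => ~~ P m w) (iota 0 n).
have mfirst n : measurable_fun setT (first n).
  by apply: measurable_and => //; apply: measurable_fun_all => m; exact: measurable_neg.
have first_minn w (H : exists n, P n w) n : first n w -> ex_minn H = n.
  case/andP=> Pn /allP nP; case: ex_minnP => m Pm min_m.
  apply/eqP; rewrite eqn_leq min_m //= leqNgt; apply/negP => mn.
  by have := nP m; rewrite mem_iota /= Pm => /(_ mn).
rewrite (_ : _ @^-1` Y = \bigcup_n ([set w | first n w] `&` h n @^-1` Y) `|`
    ([set w | forall n, ~~ P n w] `&` cst x0 @^-1` Y)).
  apply: measurableU.
    apply: bigcupT_measurable => n; apply: measurableI.
      exact: measurable_bool_set.
    by rewrite -[_ @^-1` _]setTI; exact: mh.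
  apply: measurableI; last by rewrite -[_ @^-1` _]setTI; exact: measurable_cst.
  rewrite (_ : [set w | _] = \bigcap_n [set w | ~~ P n w]).
    by apply: bigcapT_measurable => n; apply: measurable_bool_set; exact: measurable_neg.
  by apply/seteqP; split=> [w nP n _|w nP n]; exact: nP.
apply/seteqP; split=> w /=; case: pselect => [H|H].
- move=> Yw; left; exists (ex_minn H) => //; split=> //=.
  case: ex_minnP => n Pn min_n; rewrite /first Pn; apply/allP => m.
  by rewrite mem_iota /=; apply: contraTN => /min_n; rewrite leqNgt.
- by move=> Y0; right; split=> // n; apply/negP => Pn; apply: H; exists n.
- case=> [[n _ [/= /first_minn -> //]]|[nP _]].
  by case: H => n Pn; move: (nP n); rewrite Pn.
- case=> [[n _ [/andP[Pn _] _]]|[_ //]].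
  by exfalso; apply: H; exists n.
Qed.

End measurable_discrete.

Section measurable_sup.
Context d (Om : measurableType d) (R : realType).

Lemma measurable_fun_sup_range (h : nat -> Om -> R) :
  (forall k, measurable_fun setT (h k)) ->
  measurable_fun setT (fun w => sup (range (h ^~ w))).
Proof.
move=> mh _ Y mY; rewrite setTI.
pose B := [set w | has_ubound (range (h ^~ w))].
have mB : measurable B.
  rewrite (_ : B = \bigcup_(M : nat) \bigcap_k [set w | h k w <= M%:R]).
    apply: bigcupT_measurable => M; apply: bigcapT_measurable => k.
    by apply: measurable_bool_set; apply: measurable_fun_ler => //; exact: measurable_cst.
  apply/seteqP; split=> w /=; last by case=> M _ ubM; exists M%:R => _ [k _ <-]; exact: ubM.
  case=> M ubM; exists (Num.bound `|M|) => // k _ /=.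
  apply: le_trans (ubM _ (ex_intro2 _ _ k I erefl)) _.
  by rewrite (le_trans (ler_norm M)) // ltW // archi_boundP.
(* [sup] is 0 on sets without an upper bound, hence the split along [B]. *)
have supE w : sup (range (h ^~ w)) = sups (h ^~ w) 0.
  by congr sup; apply/seteqP; split=> _ [k _ <-]; exists k.
rewrite (_ : _ @^-1` Y = (B `&` (fun w => sups (h ^~ w) 0) @^-1` Y) `|`
    (~` B `&` cst 0 @^-1` Y)).
  apply: measurableU; last first.
    by apply: measurableI; [exact: measurableC|rewrite -[_ @^-1` _]setTI; exact: measurable_cst].
  by apply: measurable_fun_sups => // k; exact: measurable_funS (mh k).
apply/seteqP; split=> w /=.
  case: (pselect (B w)) => Bw Yw; first by left; rewrite -supE.
  by right; move: Yw; rewrite sup_out // => -[].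
case=> -[Bw Yw]; first by rewrite supE.
by rewrite sup_out // => -[].
Qed.

End measurable_sup.

Lemma preimage_bool_seqs (T : Type) (X : T -> seq bool) n (f : pred (seq bool)) :
  (forall w, size (X w) = n) ->
  [set w | f (X w)] = \big[setU/set0]_(s <- bool_seqs n | f s) [set w | X w = s].
Proof.
move=> sX; rewrite -bigcup_seq_cond; apply/seteqP; split=> w /=.
  by move=> fX; exists (X w) => //=; rewrite -(sX w) mem_bool_seqs.
by case=> s /andP[_ fs] /= ->.
Qed.

Definition up_bits (R : realType) (p : R) (u : nat -> R) n := mkseq (fun j => u j < p) n.

Lemma up_bits_cat (R : realType) (p : R) (u : nat -> R) n k :
  up_bits p u (n + k) = up_bits p u n ++ [seq u j < p | j <- iota n k].
Proof. by rewrite /up_bits /mkseq iotaD map_cat. Qed.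

Lemma mutually_independent_inr d (Om : measurableType d) (R : realType)
    (P : probability Om R) (X Y : nat -> Om -> R) :
  mutually_independent P (fun i => match i with inl n => X n | inr n => Y n end) ->
  mutually_independent P Y.
Proof.
move=> ind J B uJ mB.
have := ind (map inr J) (fun i => if i is inr n then B n else setT).
rewrite map_inj_uniq ?big_map; last by move=> ? ? [].
move=> /(_ uJ) <-; last by case.
congr (P _); apply/seteqP; split=> w /= h n.
  by case: n => // n; rewrite mem_map; [exact: h|move=> ? ? []].
by move=> nJ; apply: (h (inr n)); rewrite mem_map // => ? ? [].
Qed.

Lemma measure_bigsetU_le d (T : measurableType d) (R : realType)
    (mu : {measure set T -> \bar R}) (I : Type) (l : seq I) (Pr : pred I) (F : I -> set T) :
  (forall i, measurable (F i)) ->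
  (mu (\big[setU/set0]_(i <- l | Pr i) F i) <= \sum_(i <- l | Pr i) mu (F i))%E.
Proof.
move=> mF; elim: l => [|i l IH]; first by rewrite !big_nil measure0.
rewrite !big_cons; case: ifP => // _.
apply: le_trans (measureU2 _ _ _) _ => //; first exact: bigsetU_measurable.
exact: leeD2l.
Qed.

Section uniform_bits.
Context d (Om : measurableType d) (R : realType) (P : probability Om R).
Variable U : nat -> Om -> R.
Hypothesis mU : forall n, measurable_fun setT (U n).
Hypothesis U_unif : forall n x, 0 <= x <= 1 -> P [set w | U n w <= x] = x%:E.
Hypothesis U_ind : mutually_independent P U.
Implicit Types (K p : R) (x : nat * nat).

Lemma measurable_lt_cst n c : measurable [set w | U n w < c].
Proof. by apply: measurable_bool_set; apply: measurable_fun_ltr => //; exact: measurable_cst. Qed.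

Lemma measurable_le_cst n c : measurable [set w | U n w <= c].
Proof. by apply: measurable_bool_set; apply: measurable_fun_ler => //; exact: measurable_cst. Qed.

Lemma uniform_lt n c : 0 <= c <= 1 -> P [set w | U n w < c] = c%:E.
Proof.
move=> /andP[c0 c1].
have le_c : (P [set w | (U n w < c)%R] <= c%:E)%E.
  rewrite -(U_unif n) ?c0 //; apply: le_measure; rewrite ?inE.
  - exact: measurable_lt_cst.
  - exact: measurable_le_cst.
  - by move=> w /=; exact: ltW.
have fin : P [set w | U n w < c] \is a fin_num.
  by rewrite ge0_fin_numE // (le_lt_trans le_c) ?ltey.
rewrite -(fineK fin); congr EFin; apply/eqP; rewrite eq_le -lee_fin fineK // le_c /=.
apply/ler_addgt0Pr => e e0; rewrite -lerBlDr.
have [ce|ec] := leP c e; first by rewrite (le_trans _ (fine_ge0 (measure_ge0 _ _))) ?subr_le0.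
rewrite -lee_fin fineK // -(U_unif n); last by apply/andP; split; lra.
apply: le_measure; rewrite ?inE; [exact: measurable_le_cst|exact: measurable_lt_cst|].
by move=> w /= h; apply: le_lt_trans h _; lra.
Qed.

Lemma uniform_ge n c : 0 <= c <= 1 -> P [set w | c <= U n w] = (1 - c)%:E.
Proof.
move=> c01; rewrite (_ : [set w | c <= U n w] = ~` [set w | U n w < c]).
  by rewrite probability_setC ?uniform_lt //; exact: measurable_lt_cst.
by apply/seteqP; split=> w /=; rewrite leNgt => /negP.
Qed.

Lemma measurable_up_bits_eq p n s : measurable [set w | up_bits p (U ^~ w) n = s].
Proof.
have [sn|sn] := eqVneq (size s) n; last first.
  by rewrite (_ : [set w | _] = set0) // -subset0 => w /= e; rewrite -e size_mkseq eqxx in sn.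
rewrite (_ : [set w | _] = [set w | all (fun j => (U j w < p) == nth false s j) (iota 0 n)]).
  apply/measurable_bool_set/measurable_fun_all => j.
  by apply: (measurableT_comp (f := fun b => b == _)) => //; apply: measurable_fun_ltr.
apply/seteqP; split=> w /=.
  by move=> <-; apply/allP => j; rewrite mem_iota /= => jn; rewrite nth_mkseq.
move=> /allP h; apply: (@eq_from_nth _ false); rewrite size_mkseq ?(eqP sn) // => j jn.
by rewrite nth_mkseq // (eqP (h j _)) // mem_iota.
Qed.

Lemma prob_up_bits p n s : 0 <= p <= 1 -> size s = n ->
  P [set w | up_bits p (U ^~ w) n = s] = (path_weight p s)%:E.
Proof.
move=> p01 <-; pose B j := if nth false s j then `]-oo, p[%classic else `[p, +oo[%classic.
have mB j : measurable (B j) by rewrite /B; case: ifP => _; exact: measurable_itv.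
have := @U_ind (iota 0 (size s)) B (iota_uniq _ _) mB.
rewrite (_ : [set w | _] = [set w | up_bits p (U ^~ w) (size s) = s]); last first.
  apply/seteqP; split=> w /= h.
    apply: (@eq_from_nth _ false); rewrite ?size_mkseq // => j js.
    have := h j; rewrite mem_iota /= nth_mkseq // => /(_ js).
    by rewrite /B; case: (nth false s j); rewrite /= in_itv /= ?andbT // leNgt => /negbTE.
  move=> j; rewrite mem_iota /= => js; rewrite /B -h nth_mkseq //.
  by case: ifP; rewrite /= in_itv /= ?andbT // leNgt => ->.
move=> ->.
congr EFin; rewrite /path_weight (big_nth false) /index_iota subn0.
apply: eq_bigr => j _; rewrite /B; case: (nth false s j).
  by rewrite (_ : _ @^-1` _ = [set w | U j w < p]) ?uniform_lt.
rewrite (_ : _ @^-1` _ = [set w | p <= U j w]) ?uniform_ge //.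
by apply/seteqP; split=> w /=; rewrite in_itv /= andbT.
Qed.

Lemma measurable_overshoots K x p n :
  measurable [set w | overshoots K x (up_bits p (U ^~ w) n)].
Proof.
rewrite (preimage_bool_seqs _ (fun w => size_mkseq _ n)).
by apply: bigsetU_measurable => s _; exact: measurable_up_bits_eq.
Qed.

Lemma prob_overshoots_le K x p n : 0 <= p <= 1 ->
  (P [set w | overshoots K x (up_bits p (U ^~ w) n)] <= (overshoot_prob K p n x)%:E)%E.
Proof.
move=> p01; rewrite (preimage_bool_seqs _ (fun w => size_mkseq _ n)).
apply: le_trans (measure_bigsetU_le _ _ _ (measurable_up_bits_eq p n)) _.
rewrite big_seq_cond (eq_bigr (fun s => (path_weight p s)%:E)); last first.
  by move=> s /andP[/size_bool_seqs sn _]; exact: prob_up_bits.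
rewrite -big_seq_cond sumEFin lee_fin /overshoot_prob big_mkcond /=.
by rewrite le_eqVlt; apply/orP; left; apply/eqP/eq_bigr => s _; case: ifP; rewrite ?mulr1 ?mulr0.
Qed.

Lemma measurable_ever_overshoots K x p :
  measurable [set w | exists n, overshoots K x (up_bits p (U ^~ w) n)].
Proof.
rewrite (_ : [set w | _] = \bigcup_n [set w | overshoots K x (up_bits p (U ^~ w) n)]).
  by apply: bigcupT_measurable => n; exact: measurable_overshoots.
by apply/seteqP; split=> w [n]; [exists n|move=> _; exists n].
Qed.

Lemma prob_ever_overshoots_le K x p : 0 < K -> 0 <= p <= 2^-1 -> (x.2 <= x.1)%N ->
  (P [set w | exists n, overshoots K x (up_bits p (U ^~ w) n)] <=
   (min_potential R x / K)%:E)%E.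
Proof.
move=> K0 hp rx; have /andP[p0 p2] := hp.
pose F n := [set w | overshoots K x (up_bits p (U ^~ w) n)].
have mF n : measurable (F n) by exact: measurable_overshoots.
have ndF : nondecreasing_seq F.
  move=> n m nm; apply/subsetPset => w; rewrite /F /= -(subnKC nm) up_bits_cat.
  exact: overshoots_cat.
have cvgF := nondecreasing_cvg_mu (mu := P) mF (bigcupT_measurable _ mF) ndF.
rewrite (_ : [set w | _] = \bigcup_n F n); last first.
  by apply/seteqP; split=> w [n]; [exists n|move=> _; exists n].
rewrite -(cvg_lim _ cvgF) //; apply: lime_le; first by apply/cvg_ex; eexists; exact: cvgF.
apply: nearW => n; apply: le_trans (prob_overshoots_le _ _ _ _) _; first by apply/andP; split; lra.
by rewrite lee_fin overshoot_prob_le.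
Qed.

End uniform_bits.

Section chain_paths.
Variables (R : realType) (a phi : R) (z0 : nat) (E U : nat -> R).
Local Notation p := (2 + a * phi)^-1.
Local Notation jstate := (jstate a phi z0 U).
Local Notation chain := (chain a phi z0 E U).

Lemma jstateS n : jstate n.+1 = walk_step (jstate n) (U n < p).
Proof. by []. Qed.

Lemma jstate_eq0_le n m : (n <= m)%N -> jstate n = 0%N -> jstate m = 0%N.
Proof.
move=> /subnKC <- jn0; elim: (m - n)%N => [|k IH]; first by rewrite addn0.
by rewrite addnS jstateS IH.
Qed.

Lemma foldl_walk_min_step n z r :
  foldl walk_min_step (z0, z0) (up_bits p U n) = (z, r) ->
  [/\ z = jstate n, (r = 0 -> z = 0)%N & forall i, (i <= n)%N -> (r <= jstate i)%N].
Proof.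
elim: n z r => [|n IH] z r; first by case=> <- <-; split=> // i; rewrite leqn0 => /eqP ->.
rewrite /up_bits mkseqS -cats1 foldl_cat -/(up_bits p U n).
case: (foldl _ _ _) IH => z' r' /(_ _ _ erefl) [-> r0 minr] [<- <-] /=.
rewrite -jstateS; split=> // [|i].
  by rewrite /minn; case: ltnP => // _ /r0 /(jstate_eq0_le (leqnSn n)).
rewrite leq_eqVlt ltnS => /orP[/eqP ->|/minr]; first exact: geq_minr.
by apply: leq_trans; exact: geq_minl.
Qed.

Lemma no_overshoot_ratio (K : R) : 0 < K ->
  (forall n, ~~ overshoots K (z0, z0) (up_bits p U n)) ->
  forall i m, (i <= m)%N -> (0 < jstate i)%N -> (jstate m)%:R < K * (jstate i)%:R.
Proof.
move=> K0 good i m im zi; have := overshoot_foldl (good m).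
case ez: (foldl _ _ _) => [z r]; have [<- r0 minr] := foldl_walk_min_step ez.
rewrite /overshoot /= negb_and -leqNgt -ltNge => /orP[|/lt_le_trans->//].
  by rewrite leqn0 => /eqP/r0 ->; rewrite mulr_gt0 ?ltr0n.
by rewrite ler_pM2l // ler_nat minr.
Qed.

Lemma chain_right_const t :
  exists2 t', t < t' & forall x, t <= x < t' -> chain x = chain t.
Proof.
rewrite /Defs.chain; case: pselect => [Ht|Ht].
  case: ex_minnP => n Pn min_n; exists (jtime a phi z0 E U n.+1) => // x /andP[tx xJ].
  case: pselect => [Hx|[]]; last by exists n.
  case: ex_minnP => m Pm min_m; congr jstate.
  by apply/eqP; rewrite eqn_leq min_m //= min_n // (le_lt_trans tx Pm).
exists (t + 1); first by rewrite ltrDl.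
move=> x /andP[tx _]; case: pselect => [[n Pn]|//]; case: Ht.
by exists n; exact: le_lt_trans tx Pn.
Qed.

Lemma chain_jstate_le t u : t <= u -> chain u = 0%N \/
  exists n m, [/\ (n <= m)%N, chain t = jstate n & chain u = jstate m].
Proof.
move=> tu; rewrite /Defs.chain; case: pselect => [Hu|]; last by left.
right; case: pselect => [Ht|[]]; last first.
  by case: Hu => n Pn; exists n; exact: le_lt_trans tu Pn.
case: (ex_minnP Ht) => n Pn min_n; case: (ex_minnP Hu) => m Pm _.
by exists n, m; split=> //; apply: min_n; exact: le_lt_trans tu Pm.
Qed.

End chain_paths.

Section logNp_increments.
Variables (R : realType) (N : nat).
Hypothesis lnN_gt0 : 0 < ln (N%:R : R).

Lemma logNp_ge0 k : 0 <= logNp R N k.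
Proof. by case: k => [|k] //=; rewrite le_max lexx orbT. Qed.

Lemma logNp_pos k : (0 < k)%N -> logNp R N k = ln k%:R / ln N%:R.
Proof.
case: k => [//|k] _ /=; apply/max_idPl.
by apply: divr_ge0; [rewrite ln_ge0 // ler1n|exact: ltW].
Qed.

Lemma logNp_le_add (c : R) (z z' : nat) : 0 <= c ->
  (z = 0 -> z' = 0)%N -> ((0 < z)%N -> z'%:R < expR (c * ln N%:R) * z%:R) ->
  logNp R N z' <= logNp R N z + c.
Proof.
move=> c0 z0 ratio; have [->|z'0] := eqVneq z' 0%N; first by rewrite addr_ge0 ?logNp_ge0.
have zp : (0 < z)%N by rewrite lt0n; apply: contra_neq z'0 => /z0.
move: (zp); rewrite lt0n => z_neq0.
rewrite !logNp_pos ?lt0n // ler_pdivrMr // mulrDl divfK ?gt_eqF // addrC.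
have := ratio zp; rewrite -ltr_ln ?posrE ?mulr_gt0 ?expR_gt0 ?ltr0n ?lt0n //.
by rewrite lnM ?posrE ?expR_gt0 ?ltr0n // expRK => /ltW.
Qed.

Lemma logNp_chain_le a phi z0 (E U : nat -> R) (c t u : R) : 0 <= c ->
  (forall n, ~~ overshoots (expR (c * ln N%:R)) (z0, z0) (up_bits (2 + a * phi)^-1 U n)) ->
  t <= u -> logNp R N (chain a phi z0 E U u) <= logNp R N (chain a phi z0 E U t) + c.
Proof.
move=> c0 good /(chain_jstate_le a phi z0 E U) [->|[n [m [nm -> ->]]]].
  by rewrite addr_ge0 ?logNp_ge0.
apply: logNp_le_add => // [/(jstate_eq0_le nm)//|].
exact: no_overshoot_ratio (expR_gt0 _) good n m nm.
Qed.

End logNp_increments.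

Definition running_sup_gap (R : realType) (f : R -> R) (S T : R) : R :=
  sup [set `|sup [set f u | u in `[t, T]] - f t| | t in `[S, T]].

Lemma running_sup_gap_le (R : realType) (f : R -> R) (S T c : R) : 0 <= c ->
  (forall t u, t <= u -> f u <= f t + c) -> running_sup_gap f S T <= c.
Proof.
move=> c0 incr; rewrite /running_sup_gap; set D := [set _ | _ in _].
have [->|D0] := eqVneq D set0; first by rewrite sup0.
apply: ge_sup; first exact/set0P.
move=> x [t]; rewrite /= in_itv /= => /andP[_ tT] <-.
have tmem : [set f u | u in `[t, T]] (f t) by exists t; rewrite //= in_itv /= lexx.
have ub : ubound [set f u | u in `[t, T]] (f t + c).
  by move=> y [u]; rewrite /= in_itv /= => /andP[tu _] <-; exact: incr.
have ge_ft : f t <= sup [set f u | u in `[t, T]] by apply: ub_le_sup => //; exists (f t + c).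
have le_ftc : sup [set f u | u in `[t, T]] <= f t + c by apply: ge_sup => //; exists (f t).
by rewrite ger0_norm ?subr_ge0 //; lra.
Qed.

Section rational_reduction.
Variable R : realType.
Implicit Types (f : R -> R) (t T : R).

Definition right_const_below T f :=
  forall t, t < T -> exists2 t', t < t' & forall x, t <= x < t' -> f x = f t.

(* Enumerates [t], [T] and the rationals of [ ]t, T[ ]; other indices repeat [t]. *)
Definition itv_rat_point t T (k : nat) : R :=
  match k with
  | 0 => t
  | 1 => T
  | k'.+2 => if @unpickle rat k' is Some q then
               if t < ratr q < T then ratr q else t
             else t
  end.

Lemma itv_rat_point_itv t T k : t <= T -> t <= itv_rat_point t T k <= T.
Proof.
move=> tT; case: k => [|[|k]] /=; rewrite ?lexx ?tT //.
by case: (unpickle k) => [q|]; [case: ifP => [/andP[/ltW-> /ltW->]|]|]; rewrite ?lexx ?tT.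
Qed.

Lemma image_itv_right_const T f t : right_const_below T f -> t <= T ->
  [set f u | u in `[t, T]] = range (fun k => f (itv_rat_point t T k)).
Proof.
move=> rc tT; apply/seteqP; split=> y; last first.
  by case=> k _ <-; exists (itv_rat_point t T k) => //; rewrite /= in_itv itv_rat_point_itv.
case=> u; rewrite /= in_itv /= => /andP[tu uT] <-.
have [->|uT'] := eqVneq u T; first by exists 1%N.
have uT'' : u < T by rewrite lt_neqAle uT' uT.
have [u' uu' fu'] := rc u uT''.
have um : u < Order.min u' T by rewrite lt_min uu'.
have [q] := rat_in_itvoo um.
rewrite in_itv /= lt_min => /andP[uq /andP[qu' qT]].
exists (pickle q).+2 => //=; rewrite pickleK (le_lt_trans tu uq) qT.
by apply: fu'; rewrite qu' ltW.
Qed.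

Lemma right_const_below_sup_dist T f : right_const_below T f ->
  right_const_below T (fun t => `|sup [set f u | u in `[t, T]] - f t|).
Proof.
move=> rc t tT; have [t' tt' ft'] := rc t tT.
exists (Order.min t' T); first by rewrite lt_min tt'.
move=> x /andP[tx]; rewrite lt_min => /andP[xt' xT].
have fx : f x = f t by apply: ft'; rewrite tx.
rewrite fx; congr (`|sup _ - _|); apply/seteqP; split=> y [u].
  rewrite /= !in_itv /= => /andP[xu uT] <-; exists u => //.
  by rewrite in_itv /= (le_trans tx xu).
rewrite /= !in_itv /= => /andP[tu uT] <-; have [ux|xu] := ltP u x.
  exists x; first by rewrite in_itv /= lexx ltW.
  by rewrite fx ft' // tu (lt_trans ux xt').
by exists u => //; rewrite in_itv /= xu.
Qed.

End rational_reduction.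

Lemma measurable_running_sup_gap d (Om : measurableType d) (R : realType)
    (Y : Om -> R -> R) (S T : R) : S <= T ->
  (forall t, measurable_fun setT (Y ^~ t)) -> (forall w, right_const_below T (Y w)) ->
  measurable_fun setT (fun w => running_sup_gap (Y w) S T).
Proof.
move=> ST mY rc; rewrite /running_sup_gap.
under eq_fun => w do rewrite (image_itv_right_const (right_const_below_sup_dist (rc w)) ST).
apply: measurable_fun_sup_range => k.
have /andP[_ pT] := itv_rat_point_itv k ST.
under eq_fun => w do rewrite (image_itv_right_const (rc w) pT).
apply: measurableT_comp => //; apply: measurable_funB => //.
exact: measurable_fun_sup_range.
Qed.

Section chain_measurable.
Context d (Om : measurableType d) (R : realType) (a phi : R) (z0 : nat).
Variables E U : nat -> Om -> R.
Hypotheses (mE : forall n, measurable_fun setT (E n))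
  (mU : forall n, measurable_fun setT (U n)).

Lemma measurable_jstate n : measurable_fun setT (fun w => jstate a phi z0 (U ^~ w) n).
Proof.
elim: n => [|n IH]; first exact: measurable_cst.
apply: (measurable_fun_nat_dep (g := fun w => jstate a phi z0 (U ^~ w) n)
  (F := fun k w => walk_step k (U n w < (2 + a * phi)^-1))) => // k.
by apply: (measurableT_comp (f := walk_step k)) => //; exact: measurable_fun_ltr.
Qed.

Lemma measurable_jtime n :
  measurable_fun setT (fun w => jtime a phi z0 (E ^~ w) (U ^~ w) n).
Proof.
elim: n => [|n IH]; rewrite /jtime.
  by under eq_fun do rewrite big_ord0; exact: measurable_cst.
under eq_fun do rewrite big_ord_recr /=.
apply: measurable_funD => //.
apply: (measurable_fun_nat_dep (g := fun w => jstate a phi z0 (U ^~ w) n)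
  (F := fun k w => hold a phi k (E n w))); first exact: measurable_jstate.
case=> [|k]; first exact: measurable_cst.
by apply: measurable_funM => //; exact: measurable_cst.
Qed.

Lemma measurable_chain t :
  measurable_fun setT (fun w => chain a phi z0 (E ^~ w) (U ^~ w) t).
Proof.
apply: (measurable_fun_ex_minn (P := fun n w => t < jtime a phi z0 (E ^~ w) (U ^~ w) n.+1)
  (h := fun n w => jstate a phi z0 (U ^~ w) n)); last exact: measurable_jstate.
by move=> n; apply: measurable_fun_ltr; [exact: measurable_cst|exact: measurable_jtime].
Qed.

End chain_measurable.

Lemma right_const_below_chain (R : realType) (a phi : R) z0 (E U : nat -> R)
    (h : nat -> R) (c T : R) : 0 <= c ->
  right_const_below T (fun t => h (chain a phi z0 E U (t * c))).
Proof.
move=> c0 t _; have [s ts chain_s] := chain_right_const a phi z0 E U (t * c).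
exists (t + (s - t * c) / (c + 1)); first by rewrite ltrDl divr_gt0 ?subr_gt0 //; lra.
move=> x /andP[tx]; rewrite -ltrBlDl ltr_pdivlMr; last lra.
by move=> xs; congr h; apply: chain_s; rewrite ler_wpM2r //=; nra.
Qed.

Section asymptotics.
Variable R : realType.

Lemma truncn_div_le (N : nat) (s : R) : 1 <= s -> (Num.truncn (N%:R / s) <= N)%N.
Proof.
move=> s1; rewrite truncn_le_nat (@le_lt_trans _ _ N%:R) ?ltr_nat //.
by rewrite ler_pdivrMr ?(lt_le_trans ltr01) // ler_peMr.
Qed.

Lemma near_ln_ge (M : R) : \forall N \near \oo, M <= ln (N%:R : R).
Proof.
exists (Num.truncn (expR M)).+1 => // N /= hN.
rewrite -[M]expRK ler_ln ?posrE ?expR_gt0 //.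
  by rewrite ltW // (lt_le_trans (truncnS_gt _)) // ler_nat.
by rewrite (lt_le_trans (expR_gt0 M)) // (le_trans (ltW (truncnS_gt _))) // ler_nat.
Qed.

Lemma one_plus_div_expR_le (c e x : R) : 0 < c -> 0 < e -> 0 <= x ->
  2 * (1 + 2 / c) / (c * e) <= x -> (1 + x) / expR (c * x) <= e.
Proof.
move=> c0 e0 x0 xM; set y := c * x / 2.
have y0 : 0 <= y by rewrite /y divr_ge0 ?mulr_ge0 // ltW.
have exp_ge : (1 + y) * (1 + y) <= expR (c * x).
  rewrite (_ : c * x = y + y); last by rewrite /y; field.
  by rewrite expRD ler_pM ?expR_ge1Dx //; lra.
have ey : 1 + 2 / c <= e * y.
  move: xM; rewrite ler_pdivrMr ?mulr_gt0 // /y; nra.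
have xE : x = y * (2 / c) by rewrite /y; field; exact: lt0r_neq0.
have c2 : 0 < 2 / c by rewrite divr_gt0.
rewrite ler_pdivrMr ?expR_gt0 // (le_trans _ (ler_wpM2l (ltW e0) exp_ge)) // xE.
nra.
Qed.

Lemma cvg_one_plus_ln_div_expR (c : R) : 0 < c ->
  (fun N : nat => (1 + ln (N%:R : R)) / expR (c * ln N%:R)) @ \oo --> 0.
Proof.
move=> c0; apply/cvgrPdist_le => e e0; near=> N.
have lnN0 : 0 <= ln (N%:R : R) by near: N; exact: near_ln_ge.
rewrite sub0r normrN ger0_norm ?divr_ge0 ?expR_ge0 ?addr_ge0 //.
by apply: one_plus_div_expR_le => //; near: N; exact: near_ln_ge.
Unshelve. all: by end_near.
Qed.

End asymptotics.

Lemma prob_running_sup_gap_gt_le d (Om : measurableType d) (R : realType) (P : probability Om R)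
    (E U : nat -> Om -> R) (a phi c T delta : R) (N z0 : nat) :
  0 <= a * phi -> 0 <= c -> 0 <= T -> 0 < delta -> 0 < ln (N%:R : R) -> (z0 <= N)%N ->
  (forall n, measurable_fun setT (E n)) -> (forall n, measurable_fun setT (U n)) ->
  (forall n x, 0 <= x <= 1 -> P [set w | U n w <= x] = x%:E) ->
  mutually_independent P U ->
  (P [set w | (delta < running_sup_gap
       (fun t => logNp R N (chain a phi z0 (E ^~ w) (U ^~ w) (t * c))) 0 T)%R]
    <= ((1 + ln (N%:R : R)) / expR (delta / 2 * ln N%:R))%:E)%E.
Proof.
move=> aphi0 c0 T0 d0 lnN0 z0N mE mU U_unif U_ind.
set K := expR (delta / 2 * ln (N%:R : R)).
have K0 : 0 < K by exact: expR_gt0.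
have p_le : 0 <= (2 + a * phi)^-1 <= 2^-1.
  by rewrite invr_ge0 lef_pV2 ?posrE ?lerDl //; lra.
have PA := prob_ever_overshoots_le mU U_unif U_ind (x := (z0, z0)) K0 p_le (leqnn z0).
have mA := measurable_ever_overshoots mU K (z0, z0) (2 + a * phi)^-1.
set A := [set w | _] in PA mA; set S := [set w | _].
have mS : measurable S.
  apply/measurable_bool_set/measurable_fun_ltr; first exact: measurable_cst.
  apply: measurable_running_sup_gap => // [t|w]; last exact: right_const_below_chain.
  exact: (measurableT_comp (f := logNp R N)) (measurable_chain _ _ _ mE mU _).
have SA : S `<=` A.
  move=> w; apply: contraPP => /forallNP good; apply/negP; rewrite -leNgt.
  have d2 : 0 <= delta / 2 by rewrite divr_ge0 // ltW.
  apply: le_trans (_ : delta / 2 <= delta); last lra.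
  apply: running_sup_gap_le => // t u tu.
  apply: logNp_chain_le => //; last exact: ler_wpM2r.
  by move=> n; apply/negP; exact: good.
apply: le_trans (le_measure _ _ _ SA) _; rewrite ?inE //.
apply: le_trans PA _; rewrite lee_fin ler_pM2r ?invr_gt0 //.
exact: min_potential_diag_le.
Qed.
Theorem lemma4p14 (R : realType) (a b : R) (phi : nat -> R)
  (d : measure_display) (Omega : measurableType d) (P : probability Omega R)
  (E U : nat -> Omega -> R) (eps : R) :
  0 < a ->
  (forall N, 0 < phi N <= 1) ->
  0 <= b < 1 ->
  (fun N : nat => - ln (phi N) / ln (N%:R : R)) @ \oo --> b ->
  (* E n ~ Exp(1), U n ~ Unif[0,1], all mutually independent *)
  (forall n, measurable_fun setT (E n)) ->
  (forall n, measurable_fun setT (U n)) ->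
  (forall n x, 0 <= x -> P [set w | x < E n w] = (expR (- x))%:E) ->
  (forall n x, 0 <= x <= 1 -> P [set w | U n w <= x] = x%:E) ->
  mutually_independent P
    (fun i : nat + nat => match i with inl n => E n | inr n => U n end) ->
  0 < eps ->
  let T := (1 - b) / a + eps in
  let Y := fun (N : nat) (w : Omega) (t : R) =>
    logNp R N (chain a (phi N) (Num.truncn ((N%:R : R) / Num.sqrt (ln (N%:R : R))))
                 (fun n => E n w) (fun n => U n w) (t / phi N * ln (N%:R : R))) in
  let Yt := fun (N : nat) (w : Omega) (t : R) =>
    sup [set Y N w u | u in `[t, T]] in
  forall delta : R, 0 < delta ->
    (fun N : nat =>
       P [set w | delta < sup [set `|Yt N w t - Y N w t| | t in `[0, T]]])
      @ \oo --> 0%E.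
Proof.
move=> a0 phi01 /andP[_ b1] _ mE mU _ U_unif ind eps0 T Y Yt delta d0.
have T0 : 0 <= T by rewrite addr_ge0 ?divr_ge0 ?subr_ge0 ?ltW.
have U_ind := mutually_independent_inr ind.
apply: (@squeeze_cvge _ _ _ _ (cst 0%E) _
  (fun N => ((1 + ln (N%:R : R)) / expR (delta / 2 * ln N%:R))%:E)); last 2 first.
- exact: cvg_cst.
- apply/fine_cvgP; split; first exact: nearW.
  by apply: cvg_one_plus_ln_div_expR; rewrite divr_gt0.
near=> N; rewrite measure_ge0 /=.
have /andP[phi0 _] := phi01 N.
have lnN1 : 1 <= ln (N%:R : R) by near: N; exact: near_ln_ge.
have YE : Y N = fun w t => logNp R N (chain a (phi N)
    (Num.truncn ((N%:R : R) / Num.sqrt (ln (N%:R : R)))) (E ^~ w) (U ^~ w)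
    (t * ((phi N)^-1 * ln N%:R))).
  by apply: funext => w; apply: funext => t; rewrite /Y mulrA.
rewrite /Yt YE; apply: prob_running_sup_gap_gt_le => //.
- by rewrite mulr_ge0 // ltW.
- by rewrite mulr_ge0 ?invr_ge0 ?ltW // (lt_le_trans ltr01).
- exact: (lt_le_trans ltr01).
- by apply: truncn_div_le; rewrite -[leLHS]sqrtr1 ler_sqrt // (le_trans ler01 lnN1).
Unshelve. all: by end_near.
Qed.
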